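(* Let $\mathbf{A}\in\mathbb{R}^{d\times n}_{\ge0}$, $\epsilon\in[0,\frac12]$, $p\ge2$. Consider the iterates $w_t$ of the algorithm PNormPacking described in the context, and define $\Phi_t = \|\mathbf{A}w_t\|_p - \|w_t\|_1$. Then in every iteration $t$ of the algorithm, $\Phi_{t+1}\le\Phi_t$.
   Context: Powers of vectors are entrywise, $\circ$ is the entrywise product. Algorithm PNormPacking$(\mathbf{A},\epsilon,p)$: set $\eta = 1/p$, $T = \frac{4p\log(nd/\epsilon)}{\epsilon}$, $w_0 = \frac{\epsilon}{n^2 d}\mathbf{1}$, $z=\mathbf{0}$, $t=0$. While $\|w_t\|_1\le\epsilon^{-1}$: let $v_t = \mathbf{A}w_t/\|\mathbf{A}w_t\|_p$, $g_t = \max(0,\mathbf{1}-\mathbf{A}^\top(v_t)^{p-1})$ entrywise, $w_{t+1} = w_t\circ(1+\eta g_t)$, $z\leftarrow z+(v_t)^{p-1}$, $t\leftarrow t+1$; if $t\ge T$, return $z/\|z\|_q$ with $q = p/(p-1)$. If the loop exits, return $w_t/\|w_t\|_1$. *)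

From mathcomp Require Import all_boot all_order all_algebra.
From mathcomp Require Import all_classical all_reals all_analysis.
Set Implicit Arguments. Unset Strict Implicit. Unset Printing Implicit Defensive.
Import Order.TTheory GRing.Theory Num.Theory.
Local Open Scope ring_scope.

Section PNormPacking.
Variables (R : realType) (d n : nat) (A : 'M[R]_(d, n)) (eps p : R).

Definition pnorm m (x : 'cV[R]_m) : R := (\sum_i `|x i 0| `^ p) `^ (p^-1).
Definition l1norm m (x : 'cV[R]_m) : R := \sum_i `|x i 0|.
Definition epow m (x : 'cV[R]_m) (r : R) : 'cV[R]_m := \col_i (x i 0 `^ r).

Definition eta : R := p^-1.
Definition Tbound : R := 4 * p * ln ((n * d)%:R / eps) / eps.
Definition w0 : 'cV[R]_n := const_mx (eps / ((n ^ 2 * d)%:R)).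

Definition vstep (w : 'cV[R]_n) : 'cV[R]_d := (pnorm (A *m w))^-1 *: (A *m w).
Definition gstep (w : 'cV[R]_n) : 'cV[R]_n :=
  \col_j Num.max 0 (1 - (A^T *m epow (vstep w) (p - 1)) j 0).
Definition wstep (w : 'cV[R]_n) : 'cV[R]_n :=
  \col_j (w j 0 * (1 + eta * gstep w j 0)).

Fixpoint witer (t : nat) : 'cV[R]_n :=
  if t is t'.+1 then wstep (witer t') else w0.

Definition Phi (t : nat) : R := pnorm (A *m witer t) - l1norm (witer t).

(* iteration t (0-indexed, the one computing w_{t+1} from w_t) is executed by
   the algorithm: the while-condition held at w_0,...,w_t and no earlier
   iteration returned because of the counter reaching T. *)
Definition iteration_executed (t : nat) : Prop :=
  (forall s, (s <= t)%N -> l1norm (witer s) <= eps^-1) /\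
  (forall s, (s < t)%N -> (s.+1)%:R < Tbound).
End PNormPacking.

(* Write x = A w, N = ||x||_p and w' = w o (1 + g/p).  The l1 norm grows by
   exactly (1/p) sum_j w_j g_j, and row i of A w' is x_i + S_i/p with
   S_i = sum_j A_ij w_j g_j.  Since (1 + m/p)^p <= e^m <= 1 + m + m^2 on [0, 1]
   and S_i^2 <= x_i sum_j A_ij w_j g_j^2 (Cauchy-Schwarz),
   ||A w'||_p^p <= N^p + sum_i x_i^(p-1) sum_j A_ij w_j (g_j + g_j^2).
   As sum_i x_i^(p-1) A_ij = N^(p-1) a_j with a = A^T v^(p-1), and
   (g_j + g_j^2) a_j <= g_j for g_j = max(0, 1 - a_j), the right-hand side is
   at most N^p + N^(p-1) sum_j w_j g_j; concavity of t |-> t^(1/p) at N^p then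
   bounds the growth of ||A w||_p by the growth of ||w||_1. *)

From mathcomp Require Import all_boot all_order all_algebra.
From mathcomp Require Import all_classical all_reals all_analysis.
From mathcomp Require Import ring lra.
Import Order.TTheory GRing.Theory Num.Theory.
Local Open Scope ring_scope.

Section RealInequalities.
Context {R : realType}.

Lemma expR_le1DxDsqr [x : R] : 0 <= x <= 1 -> expR x <= 1 + x + x ^+ 2.
Proof.
(* [1 - y <= expR (- y)] with [y = x / 8]; the power 8 makes
   [(1 - x/8)^8 (1 + x + x^2) >= 1] hold on all of [0, 1] (4 fails at 1). *)
move=> /andP[x0 x1]; set y := x / 8.
have xE : x = 8 * y by rewrite /y mulrC divfK.
have y0 : 0 <= y by rewrite /y divr_ge0.
have ey_le1 : expR y * (1 - y) <= 1.
  by rewrite -[leRHS](divff (lt0r_neq0 (expR_gt0 y))) ler_wpM2l ?expR_ge0 // -expRN expR_ge1Dx.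
have poly : 1 <= (1 - y) ^+ 8 * (1 + x + x ^+ 2) by rewrite xE; nra.
have -> : expR x = expR y ^+ 8 by rewrite xE expRM_natl.
apply: (le_trans (y := expR y ^+ 8 * ((1 - y) ^+ 8 * (1 + x + x ^+ 2)))).
  by rewrite ler_peMr ?exprn_ge0 ?expR_ge0.
have ey_ge0 : 0 <= expR y * (1 - y) by rewrite mulr_ge0 ?expR_ge0 //; lra.
rewrite mulrA -exprMn -[leRHS]mul1r ler_wpM2r ?exprn_ile1 //; nra.
Qed.

Lemma powR_1Ddiv_le_expR [p x : R] : 0 < p -> 0 <= x -> (1 + x / p) `^ p <= expR x.
Proof.
move=> p0 x0; have xp0 := divr_ge0 x0 (ltW p0).
rewrite /powR gt_eqF ?ler_expR; last by lra.
have ln_le : ln (1 + x / p) <= x / p by rewrite le_ln1Dx //; lra.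
by rewrite (le_trans (ler_wpM2l (ltW p0) ln_le)) // mulrCA divff ?mulr1 ?lt0r_neq0.
Qed.

Lemma powR_perturb_le [p X S1 S2 : R] : 0 < p -> 0 <= S1 <= X -> 0 <= S2 ->
  S1 ^+ 2 <= X * S2 ->
  (X + p^-1 * S1) `^ p <= X `^ p + X `^ (p - 1) * (S1 + S2).
Proof.
move=> p0 /andP[S1_ge0 S1_le] S2_ge0 S1_sqr.
have [X0|X_neq0] := eqVneq X 0.
  have -> : S1 = 0 by apply/le_anti; rewrite S1_ge0 -X0 S1_le.
  by rewrite X0 mulr0 addr0 powR0 ?lt0r_neq0 // add0r mulr_ge0 ?powR_ge0 ?addr_ge0.
have X0 : 0 < X by rewrite lt0r X_neq0 (le_trans S1_ge0).
set m := S1 / X; set Y := X `^ (p - 1).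
have m0 : 0 <= m := divr_ge0 S1_ge0 (ltW X0).
have m1 : m <= 1 by rewrite ler_pdivrMr // mul1r.
have -> : X + p^-1 * S1 = X * (1 + m / p).
  by rewrite /m; field; rewrite X_neq0 lt0r_neq0.
have m_p0 : 0 <= 1 + m / p by rewrite addr_ge0 // divr_ge0 // ltW.
rewrite powRM ?(ltW X0) // -(mulr_powRB1 (ltW X0) p0) -/Y.
have Y0 : 0 < Y := powR_gt0 _ X0.
have pert : (1 + m / p) `^ p <= 1 + m + m ^+ 2.
  apply: (le_trans (powR_1Ddiv_le_expR p0 m0)).
  by rewrite expR_le1DxDsqr ?m0.
apply: (le_trans (ler_wpM2l (mulr_ge0 (ltW X0) (ltW Y0)) pert)).
have -> : X * Y * (1 + m + m ^+ 2) = Y * (X + S1 + S1 ^+ 2 / X).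
  by rewrite /m; field.
by rewrite [X * Y]mulrC -mulrDr addrA ler_pM2l // lerD2l ler_pdivrMr // mulrC.
Qed.

Lemma powRV_le_tangent [p N D : R] : 1 < p -> 0 <= N -> 0 <= D ->
  (N `^ p + N `^ (p - 1) * D) `^ p^-1 <= N + p^-1 * D.
Proof.
move=> p1 N0 D0; have p0 : 0 < p by lra.
have p_neq0 := lt0r_neq0 p0.
have [->|N_neq0] := eqVneq N 0.
  rewrite powR0 // powR0 ?subr_eq0 ?gt_eqF // mul0r addr0 powR0 ?invr_eq0 //.
  by rewrite add0r mulr_ge0 // invr_ge0 ltW.
have {N_neq0}N0 : 0 < N by rewrite lt0r N_neq0.
set u := D / N.
have u0 : 0 <= u := divr_ge0 D0 (ltW N0).
have -> : N `^ p + N `^ (p - 1) * D = N `^ p * (1 + u).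
  rewrite -(mulr_powRB1 (ltW N0) p0) /u; field; exact: lt0r_neq0.
rewrite powRM ?powR_ge0 ?addr_ge0 // -powRrM mulfV // powRr1 ?(ltW N0) //.
(* Young's inequality for the exponents [p] and [p / (p - 1)]. *)
have q0 : 0 < (1 - p^-1)^-1 by rewrite invr_gt0 subr_gt0 invf_lt1.
have young := @conjugate_powR _ ((1 + u) `^ p^-1) 1 p _ (powR_ge0 _ _) ler01 p0 q0.
rewrite mulr1 powR1 -powRrM mulVf // powRr1 ?addr_ge0 // invrK in young.
have {}young := young (subrKC _ _).
apply: le_trans (ler_wpM2l (ltW N0) young) _.
suff -> : N * ((1 + u) / p + 1 * (1 - p^-1)) = N + p^-1 * D by [].
by rewrite /u; field; rewrite p_neq0 (lt0r_neq0 N0).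
Qed.

Lemma wsum_CauchySchwarz (I : finType) (c h : I -> R) : (forall j, 0 <= c j) ->
  (\sum_j c j * h j) ^+ 2 <= (\sum_j c j) * \sum_j c j * h j ^+ 2.
Proof.
move=> c0; set X := \sum_j c j; set S1 := \sum_j c j * h j.
set S2 := \sum_j c j * h j ^+ 2.
have lagrange : \sum_j \sum_k c j * c k * (h j - h k) ^+ 2 = 2 * (X * S2 - S1 ^+ 2).
  transitivity (\sum_j (c j * h j ^+ 2 * X + c j * S2 - 2 * (c j * h j * S1))).
    apply: eq_bigr => j _; rewrite /X /S1 /S2 !mulr_sumr -big_split -sumrB /=.
    by apply: eq_bigr => k _; ring.
  rewrite sumrB big_split /= -mulr_sumr -!mulr_suml -/X -/S1 -/S2; ring.
rewrite -subr_ge0 -(pmulr_rge0 _ (ltr0n R 2)) -lagrange.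
by apply: sumr_ge0 => j _; apply: sumr_ge0 => k _; rewrite mulr_ge0 ?sqr_ge0 ?mulr_ge0.
Qed.

Lemma max0_1B_le1 [a : R] : 0 <= a -> Num.max 0 (1 - a) <= 1.
Proof. by move=> a0; rewrite ge_max ler01 gerBl. Qed.

Lemma max0_1B_gain [a : R] : 0 <= a ->
  (Num.max 0 (1 - a) + Num.max 0 (1 - a) ^+ 2) * a <= Num.max 0 (1 - a).
Proof.
move=> a0; case: (lerP 0 (1 - a)) => [a1|_]; last by rewrite expr0n /= addr0 mul0r.
rewrite -subr_ge0 (_ : _ - _ = (1 - a) ^+ 3) ?exprn_ge0 //; ring.
Qed.

Lemma powR_rescale [x N r : R] : 0 < r -> 0 <= x <= N ->
  N `^ r * (N^-1 * x) `^ r = x `^ r.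
Proof.
move=> r0 /andP[x0 xN]; have [N0|N_neq0] := eqVneq N 0.
  have -> : x = 0 by apply/le_anti; rewrite x0 -N0 xN.
  by rewrite N0 powR0 ?mul0r ?lt0r_neq0.
have N0 : 0 <= N := le_trans x0 xN.
by rewrite -powRM ?mulVKf // mulr_ge0 // invr_ge0.
Qed.

End RealInequalities.

Section PNorm.
Context {R : realType} {m : nat} (p : R).
Hypothesis p_gt0 : 0 < p.

Lemma powR_pnorm (x : 'cV[R]_m) : pnorm p x `^ p = \sum_i `|x i 0| `^ p.
Proof.
by rewrite -powRrM mulVf ?lt0r_neq0 // powRr1 // sumr_ge0 // => i _; rewrite powR_ge0.
Qed.

Lemma normc_le_pnorm (x : 'cV[R]_m) i : `|x i 0| <= pnorm p x.
Proof.
rewrite -[leLHS](@powRr1 _ `|x i 0|) // -(mulfV (lt0r_neq0 p_gt0)) powRrM.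
apply: ge0_ler_powR; first by rewrite invr_ge0 ltW.
- by rewrite nnegrE.
- by rewrite nnegrE sumr_ge0.
by rewrite (bigD1 i) //= lerDl sumr_ge0 // => k _; rewrite powR_ge0.
Qed.

End PNorm.

Section PotentialStep.
Context {R : realType} {d n : nat} {A : 'M[R]_(d, n)} {p : R} {w : 'cV[R]_n}.
Hypotheses (A_ge0 : forall i j, 0 <= A i j) (p_gt1 : 1 < p)
  (w_ge0 : forall j, 0 <= w j 0).

Let p_gt0 : 0 < p := lt_trans ltr01 p_gt1.
Let x i : R := (A *m w) i 0.
Let N : R := pnorm p (A *m w).
(* [grad] is the gradient of [w |-> pnorm p (A *m w)]. *)
Let grad j : R := (A^T *m epow (vstep A p w) (p - 1)) j 0.
Let g j : R := gstep A p w j 0.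
Let gain : R := \sum_j w j 0 * g j.
Let mom1 i : R := \sum_j A i j * w j 0 * g j.
Let mom2 i : R := \sum_j A i j * w j 0 * g j ^+ 2.

Lemma Aw_ge0 i : 0 <= x i.
Proof. by rewrite /x mxE sumr_ge0 // => j _; rewrite mulr_ge0. Qed.

Lemma grad_ge0 j : 0 <= grad j.
Proof.
by rewrite /grad mxE sumr_ge0 // => i _; rewrite !mxE mulr_ge0 ?powR_ge0.
Qed.

Lemma gstepE j : g j = Num.max 0 (1 - grad j).
Proof. by rewrite /g mxE. Qed.

Lemma gstep_ge0 j : 0 <= g j.
Proof. by rewrite gstepE le_max lexx. Qed.

Lemma gstep_le1 j : g j <= 1.
Proof. by rewrite gstepE max0_1B_le1 ?grad_ge0. Qed.

Lemma gain_ge0 : 0 <= gain.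
Proof. by rewrite sumr_ge0 // => j _; rewrite mulr_ge0 ?gstep_ge0. Qed.

Lemma Awstep_entry i : (A *m wstep A p w) i 0 = x i + p^-1 * mom1 i.
Proof.
rewrite /x /mom1 !mxE mulr_sumr -big_split /=.
by apply: eq_bigr => j _; rewrite mxE /eta -/(g j); ring.
Qed.

Lemma l1norm_wstep : l1norm (wstep A p w) = l1norm w + p^-1 * gain.
Proof.
rewrite /l1norm /gain mulr_sumr -big_split /=; apply: eq_bigr => j _.
have step0 : 0 <= 1 + p^-1 * g j.
  by rewrite addr_ge0 // mulr_ge0 ?gstep_ge0 // invr_ge0 ltW.
by rewrite mxE -/(g j) /eta !ger0_norm ?mulr_ge0 //; ring.
Qed.

Lemma mom1_ge0_le i : 0 <= mom1 i <= x i.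
Proof.
rewrite /x mxE sumr_ge0 /=; last by move=> j _; rewrite !mulr_ge0 ?gstep_ge0.
by apply: ler_sum => j _; rewrite ler_piMr ?mulr_ge0 ?gstep_le1.
Qed.

Lemma mom2_ge0 i : 0 <= mom2 i.
Proof. by rewrite sumr_ge0 // => j _; rewrite !mulr_ge0 ?gstep_ge0. Qed.

Lemma mom1_sqr_le i : mom1 i ^+ 2 <= x i * mom2 i.
Proof.
rewrite /x mxE; apply: (@wsum_CauchySchwarz _ 'I_n (fun j => A i j * w j 0) g).
by move=> j; rewrite mulr_ge0.
Qed.

Lemma gstep_gain_le j : (g j + g j ^+ 2) * grad j <= g j.
Proof. by rewrite gstepE max0_1B_gain ?grad_ge0. Qed.

Lemma Aw_le_pnorm i : x i <= N.
Proof. by rewrite -[x i]ger0_norm ?Aw_ge0 // normc_le_pnorm. Qed.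

Lemma sum_Aw_powR_mul j : \sum_i x i `^ (p - 1) * A i j = N `^ (p - 1) * grad j.
Proof.
rewrite /grad mxE mulr_sumr; apply: eq_bigr => i _.
rewrite [A^T j i]mxE [epow _ _ i 0]mxE [vstep _ _ _ i 0]mxE mulrCA.
rewrite powR_rescale ?subr_gt0 ?Aw_ge0 ?Aw_le_pnorm //.
by rewrite mulrC.
Qed.

Lemma sum_mom_le : \sum_i x i `^ (p - 1) * (mom1 i + mom2 i) <= N `^ (p - 1) * gain.
Proof.
have -> : \sum_i x i `^ (p - 1) * (mom1 i + mom2 i) =
    \sum_j N `^ (p - 1) * (w j 0 * ((g j + g j ^+ 2) * grad j)).
  under eq_bigr => i _ do rewrite /mom1 /mom2 -big_split mulr_sumr /=.
  rewrite exchange_big; apply: eq_bigr => j _ /=.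
  transitivity (w j 0 * (g j + g j ^+ 2) * (N `^ (p - 1) * grad j)); last by ring.
  by rewrite -sum_Aw_powR_mul mulr_sumr; apply: eq_bigr => i _; ring.
rewrite /gain mulr_sumr; apply: ler_sum => j _.
by rewrite ler_wpM2l ?powR_ge0 // ler_wpM2l ?gstep_gain_le.
Qed.

Lemma pnorm_Awstep_le : pnorm p (A *m wstep A p w) <= N + p^-1 * gain.
Proof.
have N0 : 0 <= N := powR_ge0 _ _.
apply: le_trans _ (powRV_le_tangent p_gt1 N0 gain_ge0).
have pow_ge0 (y : R) : 0 <= y `^ p := powR_ge0 _ _.
apply: ge0_ler_powR; rewrite ?nnegrE ?invr_ge0 ?(ltW p_gt0) ?sumr_ge0 //.
  by rewrite addr_ge0 // mulr_ge0 ?powR_ge0 ?gain_ge0.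
apply: (@le_trans _ _ (\sum_i (x i `^ p + x i `^ (p - 1) * (mom1 i + mom2 i)))).
  apply: ler_sum => i _; have /andP[m1_ge0 m1_le] := mom1_ge0_le i.
  rewrite Awstep_entry ger0_norm; last by rewrite addr_ge0 ?Aw_ge0 // mulr_ge0 // invr_ge0 ltW.
  by apply: powR_perturb_le; rewrite ?m1_ge0 ?mom2_ge0 ?mom1_sqr_le.
rewrite big_split lerD ?sum_mom_le // /N powR_pnorm //.
apply: ler_sum => i _; rewrite ger0_norm; [exact: lexx | exact: Aw_ge0].
Qed.

Lemma potential_wstep_le :
  pnorm p (A *m wstep A p w) - l1norm (wstep A p w) <= pnorm p (A *m w) - l1norm w.
Proof. by rewrite l1norm_wstep -/N; have := pnorm_Awstep_le; lra. Qed.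

End PotentialStep.

Lemma wstep_ge0 {R : realType} {d n : nat} (A : 'M[R]_(d, n)) [p : R] [w : 'cV[R]_n] :
  0 <= p -> (forall j, 0 <= w j 0) -> forall j, 0 <= wstep A p w j 0.
Proof.
move=> p0 w_ge0 j; rewrite mxE mulr_ge0 // addr_ge0 // mulr_ge0 ?invr_ge0 //.
by rewrite mxE le_max lexx.
Qed.

Lemma witer_ge0 {R : realType} {d n : nat} (A : 'M[R]_(d, n)) [eps p : R] :
  0 <= eps -> 0 <= p -> forall t j, 0 <= witer A eps p t j 0.
Proof.
move=> eps0 p0; elim=> [|t IH] j; first by rewrite mxE divr_ge0.
exact: wstep_ge0.
Qed.

Theorem lemma3 (R : realType) (d n : nat) (A : 'M[R]_(d, n)) (eps p : R)
  (hA : forall i j, 0 <= A i j)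
  (heps0 : 0 <= eps) (heps1 : eps <= 1 / 2) (hp : 2 <= p)
  (t : nat) (ht : iteration_executed A eps p t) :
  Phi A eps p t.+1 <= Phi A eps p t.
Proof.
have p_gt1 : 1 < p by rewrite (lt_le_trans _ hp) ?ltr1n.
have w_ge0 := witer_ge0 A heps0 (ltW (lt_trans ltr01 p_gt1)) t.
exact: potential_wstep_le hA p_gt1 w_ge0.
Qed.
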